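(* Let $1<a<2$, $B>0$, $P\ge 1$, $\delta>0$ and a positive integer $k$ with $(a/2)^{k-1}a \le 1-3\delta$. Let $(Z_n)$ be any real sequence and consider the system $X_{n+1} = aX_n + Z_n - U_n$ run under the following round-based rule starting at a time $m$ which is the start of a round, i.e. $C_m>0$ and $|X_m|\le C_m$: $U_m=0$; $C_{m+1}=aC_m+B$; $C_{m+i} = \frac a2 C_{m+i-1}+B$ for $i=2,\ldots,k$; $U_{m+i} = \frac a2 C_{m+i}\operatorname{sign}(X_{m+i})$ for $i=1,\ldots,k-1$; then $C_{m+k+j}=P^jC_{m+k}$ and $U_{m+k+j}=0$ for $j\ge 0$, up to $\tau \triangleq \inf\{j\ge0\colon |X_{m+k+j}|\le C_{m+k+j}\}$ (the round ends at time $m+k+\tau$). Then for every integer $j$ with $0\le j\le\tau$, $$\max\{|X_{m+1}|,\ldots,|X_{m+k+j}|,C_{m+k+j}\} \le P a^{k+j}\left(2C_m + \frac{aB}{(2-a)(a-1)} + \sum_{\ell=0}^{k+j-1}a^{-\ell-1}|Z_{m+\ell}|\right).$$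
   Context: $\operatorname{sign}(x)\in\{-1,0,1\}$ denotes the sign of $x$. The quantities $C_n$ are the bounds on the state magnitude maintained by a 1-bit quantizer-controller scheme: during the first $k$ steps of a round the quantizer sends signs of the state and at time $m+k+j$ it sends whether $|X_{m+k+j}|\le C_{m+k+j}$ (magnitude test). *)

From Stdlib Require Export Reals.
Open Scope R_scope.

Definition sign (x : R) : R :=
  match total_order_T x 0 with
  | inleft (left _) => -1
  | inleft (right _) => 0
  | inright _ => 1
  end.

(* Let D := aB/((2-a)(a-1)) and let M_n be the majorant with M_0 = 2C_m + D and
   M_(n+1) = a M_n + |Z_(m+n)|; unrolled, P M_(k+j) is exactly the claimed bound.
   During the first k steps the control subtracts (a/2) C sign X, which moves X
   towards 0 by at most C/2, so |X_(m+i)| <= M_i as long as C_(m+i) <= M_i; the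
   latter propagates because M_i >= D and B <= (a/2) D.  Afterwards U = 0, so
   |X| grows at most like M, and C_(m+k+j) = P C_(m+k+j-1) < P |X_(m+k+j-1)|
   before the round ends. *)
From Stdlib Require Import Reals Lra Lia Arith.
Open Scope R_scope.

Fixpoint majorant (a K : R) (z : nat -> R) (n : nat) : R :=
  match n with
  | O => K
  | S n => a * majorant a K z n + z n
  end.

Lemma majorant_closed (a K : R) (z : nat -> R) (n : nat) :
  0 < a -> (0 < n)%nat ->
  majorant a K z n = a ^ n * (K + sum_f_R0 (fun l => / a ^ (l + 1) * z l) (n - 1)).
Proof.
  intros ha Hn. destruct n as [|n]; [lia|]. replace (S n - 1)%nat with n by lia.
  induction n as [|n IH].
  - simpl. field. lra.
  - change (majorant a K z (S (S n))) with (a * majorant a K z (S n) + z (S n)).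
    rewrite IH, tech5 by lia.
    replace (S n + 1)%nat with (S (S n)) by lia.
    assert (a ^ n <> 0) by (apply pow_nonzero; lra).
    simpl. field. lra.
Qed.

Section MajorantMonotone.

Variables (a K : R) (z : nat -> R).
Hypotheses (ha : 1 <= a) (hK : 0 <= K) (hz : forall n, 0 <= z n).

Lemma majorant_ge_init (n : nat) : K <= majorant a K z n.
Proof.
  induction n as [|n IH]; simpl; [lra|].
  specialize (hz n). nra.
Qed.

Lemma majorant_monotone (n p : nat) :
  (n <= p)%nat -> majorant a K z n <= majorant a K z p.
Proof.
  induction 1 as [|p _ IH]; [lra|].
  simpl. pose proof (majorant_ge_init p). specialize (hz p). nra.
Qed.

End MajorantMonotone.

Lemma Rabs_scal_add_le (a y z M : R) :
  0 <= a -> Rabs y <= M -> Rabs (a * y + z) <= a * M + Rabs z.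
Proof.
  intros ha Hy. eapply Rle_trans; [apply Rabs_triang|].
  rewrite Rabs_mult, (Rabs_pos_eq a) by lra. nra.
Qed.

Lemma Rabs_sub_scal_sign (x c M : R) :
  0 <= c <= M -> Rabs x <= M -> Rabs (x - c * sign x) <= M.
Proof.
  unfold sign, Rabs.
  destruct (total_order_T x 0) as [[Hx|Hx]|Hx];
    repeat destruct Rcase_abs; intros; lra.
Qed.

Definition offset (a B : R) : R := a * B / ((2 - a) * (a - 1)).

Lemma offset_pos (a B : R) : 1 < a < 2 -> 0 < B -> 0 < offset a B.
Proof.
  intros ha hB. unfold offset. apply Rdiv_lt_0_compat; nra.
Qed.

Lemma B_le_half_offset (a B : R) : 1 < a < 2 -> 0 < B -> B <= a / 2 * offset a B.
Proof.
  intros ha hB.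
  assert (Hden : 0 < 2 * (2 - a) * (a - 1)) by nra.
  assert (E : a / 2 * offset a B - B = B * (3 * (a - 1) ^ 2 + 1) / (2 * (2 - a) * (a - 1))).
  { unfold offset. field. lra. }
  assert (0 < B * (3 * (a - 1) ^ 2 + 1) / (2 * (2 - a) * (a - 1))).
  { apply Rdiv_lt_0_compat; [|lra]. pose proof (pow2_ge_0 (a - 1)). nra. }
  lra.
Qed.

Section Round.

Variables (a B P : R) (k m : nat) (X Z U C : nat -> R).
Hypotheses (ha1 : 1 < a) (ha2 : a < 2) (hB : 0 < B) (hP : 1 <= P).
Hypothesis hsys : forall n : nat, X (S n) = a * X n + Z n - U n.
Hypotheses (hCm : 0 < C m) (hXm : Rabs (X m) <= C m) (hUm : U m = 0).
Hypothesis hC1 : C (m + 1)%nat = a * C m + B.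
Hypothesis hCi : forall i : nat, (2 <= i <= k)%nat ->
  C (m + i)%nat = a / 2 * C (m + i - 1)%nat + B.
Hypothesis hUi : forall i : nat, (1 <= i <= k - 1)%nat ->
  U (m + i)%nat = a / 2 * C (m + i)%nat * sign (X (m + i)%nat).
Hypothesis htail : forall j : nat,
  (forall j' : nat, (j' < j)%nat -> C (m + k + j')%nat < Rabs (X (m + k + j')%nat)) ->
  C (m + k + j)%nat = P ^ j * C (m + k)%nat /\ U (m + k + j)%nat = 0.

Local Notation M := (majorant a (2 * C m + offset a B) (fun l => Rabs (Z (m + l)%nat))).

Local Notation outside_until j :=
  (forall j' : nat, (j' < j)%nat -> C (m + k + j')%nat < Rabs (X (m + k + j')%nat)).

Lemma M_ge_offset (n : nat) : offset a B <= M n.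
Proof.
  pose proof (offset_pos a B (conj ha1 ha2) hB).
  eapply Rle_trans;
    [|apply majorant_ge_init; [lra | lra | intro; apply Rabs_pos]].
  lra.
Qed.

Lemma M_monotone (n p : nat) : (n <= p)%nat -> M n <= M p.
Proof.
  apply majorant_monotone; [lra | pose proof (offset_pos a B); lra | intro; apply Rabs_pos].
Qed.

Lemma X_succ (n : nat) :
  X (m + S n)%nat = a * X (m + n)%nat + Z (m + n)%nat - U (m + n)%nat.
Proof. rewrite <- hsys. f_equal. lia. Qed.

Lemma first_phase_bound (i : nat) : (i <= k)%nat ->
  0 <= C (m + i)%nat <= M i /\ Rabs (X (m + i)%nat) <= M i.
Proof.
  pose proof (offset_pos a B (conj ha1 ha2) hB) as HD.
  pose proof (B_le_half_offset a B (conj ha1 ha2) hB) as HBD.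
  induction i as [|i IH]; intro Hi.
  - rewrite Nat.add_0_r. simpl. lra.
  - destruct (IH ltac:(lia)) as [[HC0 HC] HX].
    pose proof (M_ge_offset i) as HMD.
    simpl majorant. rewrite X_succ.
    destruct i as [|i].
    + rewrite Nat.add_0_r in *. rewrite hUm, Rminus_0_r, hC1.
      change (M 0) with (2 * C m + offset a B).
      split; [pose proof (Rabs_pos (Z m)); nra |].
      apply Rabs_scal_add_le; lra.
    + rewrite hCi, hUi by lia. replace (m + S (S i) - 1)%nat with (m + S i)%nat by lia.
      split; [pose proof (Rabs_pos (Z (m + S i)%nat)); nra |].
      replace (a * X (m + S i)%nat + Z (m + S i)%nat
               - a / 2 * C (m + S i)%nat * sign (X (m + S i)%nat))
        with (a * (X (m + S i)%nat - C (m + S i)%nat / 2 * sign (X (m + S i)%nat))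
              + Z (m + S i)%nat) by field.
      apply Rabs_scal_add_le; [lra |].
      apply Rabs_sub_scal_sign; lra.
Qed.

Lemma state_bound (j : nat) : outside_until j ->
  forall n : nat, (n <= k + j)%nat -> Rabs (X (m + n)%nat) <= M n.
Proof.
  intros Hout n. induction n as [|n IH]; intro Hn.
  - apply first_phase_bound. lia.
  - destruct (le_lt_dec (S n) k) as [Hk|Hk]; [apply first_phase_bound; lia|].
    destruct (htail (n - k)) as [_ HU]; [intros j' Hj'; apply Hout; lia|].
    replace (m + k + (n - k))%nat with (m + n)%nat in HU by lia.
    rewrite X_succ, HU, Rminus_0_r. simpl majorant.
    apply Rabs_scal_add_le; [lra | apply IH; lia].
Qed.

Lemma C_bound (j : nat) : outside_until j -> C (m + k + j)%nat <= P * M (k + j).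
Proof.
  intro Hout. destruct j as [|j].
  - rewrite !Nat.add_0_r.
    assert (C (m + k)%nat <= M k) by (apply first_phase_bound; lia).
    pose proof (M_ge_offset k). pose proof (offset_pos a B (conj ha1 ha2) hB). nra.
  - destruct (htail (S j) Hout) as [HCS _].
    destruct (htail j) as [HCj _]; [intros j' Hj'; apply Hout; lia|].
    assert (Hrec : C (m + k + S j)%nat = P * C (m + k + j)%nat)
      by (rewrite HCS, HCj; simpl; ring).
    assert (Hout_j := Hout j ltac:(lia)).
    assert (HX : Rabs (X (m + k + j)%nat) <= M (k + j)).
    { replace (m + k + j)%nat with (m + (k + j))%nat by lia.
      apply (state_bound (S j)); [exact Hout | lia]. }
    pose proof (M_monotone (k + j) (k + S j) ltac:(lia)).
    rewrite Hrec. nra.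
Qed.

End Round.

Theorem lemma2 (a B P delta : R) (k : nat) (X Z U C : nat -> R) (m : nat)
  (ha1 : 1 < a) (ha2 : a < 2) (hB : 0 < B) (hP : 1 <= P) (hdelta : 0 < delta)
  (hk : (1 <= k)%nat)
  (hak : (a / 2) ^ (k - 1) * a <= 1 - 3 * delta)
  (hsys : forall n : nat, X (S n) = a * X n + Z n - U n)
  (hCm : 0 < C m) (hXm : Rabs (X m) <= C m)
  (hUm : U m = 0)
  (hC1 : C (m + 1)%nat = a * C m + B)
  (hCi : forall i : nat, (2 <= i <= k)%nat ->
           C (m + i)%nat = a / 2 * C (m + i - 1)%nat + B)
  (hUi : forall i : nat, (1 <= i <= k - 1)%nat ->
           U (m + i)%nat = a / 2 * C (m + i)%nat * sign (X (m + i)%nat))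
  (htail : forall j : nat,
           (forall j' : nat, (j' < j)%nat ->
              C (m + k + j')%nat < Rabs (X (m + k + j')%nat)) ->
           C (m + k + j)%nat = P ^ j * C (m + k)%nat /\ U (m + k + j)%nat = 0) :
  forall j : nat,
    (* j <= tau, where tau = inf {j >= 0 | |X_{m+k+j}| <= C_{m+k+j}} *)
    (forall j' : nat, (j' < j)%nat ->
       C (m + k + j')%nat < Rabs (X (m + k + j')%nat)) ->
    let bound :=
      P * a ^ (k + j) *
        (2 * C m + a * B / ((2 - a) * (a - 1)) +
         sum_f_R0 (fun l => / a ^ (l + 1) * Rabs (Z (m + l)%nat)) (k + j - 1)) in
    (forall i : nat, (1 <= i <= k + j)%nat -> Rabs (X (m + i)%nat) <= bound) /\
    C (m + k + j)%nat <= bound.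
Proof.
  intros j Hout bound.
  set (M := majorant a (2 * C m + offset a B) (fun l => Rabs (Z (m + l)%nat))).
  assert (Hbound : bound = P * M (k + j)%nat).
  { unfold M. rewrite majorant_closed by lia || lra. unfold bound, offset. ring. }
  rewrite Hbound. split.
  - intros i Hi.
    assert (HXi : Rabs (X (m + i)%nat) <= M i) by (eapply state_bound; eauto; lia).
    assert (M i <= M (k + j)%nat) by (apply (M_monotone a B m Z C); auto; lia).
    pose proof (Rabs_pos (X (m + i)%nat)). nra.
  - eapply C_bound; eauto.
Qed.
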